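(* Let $p$ be a prime greater than $3$ and let $u$ be a positive integer coprime to $p$. Let $a_1,a_2,a_3,\alpha_1,\alpha_2,\alpha_3$ be positive integers. Assume that the ternary diagonal $\mathbb{Z}$-lattice $\langle a_1,a_2,a_3\rangle$ is isometric over $\mathbb{Z}_p$ to $\langle 1,-\Delta_p\rangle\perp\langle p\epsilon_p\rangle$ for some $\epsilon_p\in\mathbb{Z}_p^\times$. Then there is an integer $v$ such that (i) $0<v<p^2$; (ii) $uv+a_1\alpha_1^2+a_2\alpha_2^2$ is not represented by $\langle a_1,a_2\rangle$ over $\mathbb{Z}_p$; (iii) $uv+a_1\alpha_1^2+a_2\alpha_2^2+a_3\alpha_3^2$ is represented by $\langle a_1,a_2,a_3\rangle$ over $\mathbb{Z}_p$; (iv) $\max\bigl(\mathrm{ord}_p(uv+a_1\alpha_1^2+a_2\alpha_2^2),\ \mathrm{ord}_p(uv+a_1\alpha_1^2+a_2\alpha_2^2+a_3\alpha_3^2)\bigr)\le 1$.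
   Context: $\Delta_p$ denotes a nonsquare unit of $\mathbb{Z}_p$. $\langle b_1,\dots,b_k\rangle$ denotes the lattice with diagonal Gram matrix with entries $b_1,\dots,b_k$ (quadratic form $b_1x_1^2+\cdots+b_kx_k^2$). An element $n$ is represented by such a lattice over $\mathbb{Z}_p$ if $n=b_1x_1^2+\cdots+b_kx_k^2$ for some $x_i\in\mathbb{Z}_p$. *)

From HB Require Import structures.
From mathcomp Require Import all_boot all_order all_algebra.
Unset Strict Implicit. Unset Printing Implicit Defensive.
Import Order.TTheory GRing.Theory Num.Theory.
Local Open Scope ring_scope.

(* p-adic integers Z_p modelled as the inverse limit of Z/p^k Z:
   an element of Z_p is a coherent sequence (x k)_k of integers,
   x k being a representative of the residue modulo p^k, with
   x (k+1) = x k mod p^k.  Ring operations are componentwise, so an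
   identity between polynomial expressions in Z_p holds iff it holds
   modulo p^k for every k. *)
Definition coherent (p : nat) (x : nat -> int) : Prop :=
  forall k : nat, (x k.+1 = x k %[mod Posz (p ^ k)%N])%Z.

Definition eqZp (p : nat) (x y : nat -> int) : Prop :=
  forall k : nat, (x k = y k %[mod Posz (p ^ k)%N])%Z.

Definition cstZp (n : int) : nat -> int := fun _ => n.

Definition Zp_unit (p : nat) (x : nat -> int) : Prop :=
  exists y, coherent p y /\ eqZp p (fun k => x k * y k) (cstZp 1).

Definition Zp_square (p : nat) (x : nat -> int) : Prop :=
  exists y, coherent p y /\ eqZp p (fun k => y k ^+ 2) x.

Definition repr_Zp (p : nat) (b : seq int) (n : int) : Prop :=
  exists xs : seq (nat -> int),
    size xs = size b /\
    (forall i, (i < size b)%N -> coherent p (nth (cstZp 0) xs i)) /\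
    eqZp p (cstZp n)
      (fun k => \sum_(i < size b) b`_i * (nth (cstZp 0) xs i k) ^+ 2).

Definition coherentM (p n : nat) (A : nat -> 'M[int]_n) : Prop :=
  forall i j, coherent p (fun k => A k i j).

Definition eqZpM (p n : nat) (A B : nat -> 'M[int]_n) : Prop :=
  forall i j, eqZp p (fun k => A k i j) (fun k => B k i j).

Definition isometric_Zp (p n : nat) (A B : nat -> 'M[int]_n) : Prop :=
  exists T S : nat -> 'M[int]_n,
    [/\ coherentM p n T, coherentM p n S,
        eqZpM p n (fun k => T k *m S k) (fun _ => 1%:M),
        eqZpM p n (fun k => S k *m T k) (fun _ => 1%:M) &
        eqZpM p n (fun k => (T k)^T *m A k *m T k) B].

Definition diagZp (n : nat) (d : 'I_n -> nat -> int) : nat -> 'M[int]_n :=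
  fun k => \matrix_(i, j) (if i == j then d i k else 0).

Definition diag3Zp (d0 d1 d2 : nat -> int) : nat -> 'M[int]_3 :=
  @diagZp 3 (fun i : 'I_3 => nth (cstZp 0) [:: d0; d1; d2] i).

(* ord_p n <= m  (with ord_p 0 = +infinity) *)
Definition ordp_le (p : nat) (n : int) (m : nat) : bool :=
  (n != 0) && (logn p `|n|%N <= m)%N.

From HB Require Import structures.
From mathcomp Require Import all_boot all_order all_algebra.
From mathcomp Require Import ring zify.
Import Order.TTheory GRing.Theory Num.Theory.
Local Open Scope ring_scope.

(* Reducing the isometry modulo p, congruence of Gram matrices shows that
   exactly one a_i is divisible by p and that the other two form an
   anisotropic binary form modulo p (minus their product is -Delta times a
   square, hence a nonsquare).
   If p | a3, the (3,3) entry modulo p^2 shows p^2 does not divide a3.  Choose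
   v modulo p^2 with n2 = a3 (c^2 - al3^2) and n3 = a3 c^2, where p divides
   neither c nor c^2 - al3^2: both have ord_p = 1; n2 is not represented since
   an anisotropic form modulo p is divisible by p only at points divisible by
   p, where its values are divisible by p^2; and n3 = a3 y^2 is solved by
   Hensel's lemma.
   If p | a1 (p | a2 is symmetric), choose v modulo p with n2 = a2 nu for a
   nonsquare nu and n3 a unit: a1 x^2 + a2 y^2 = a2 y^2 misses n2, while the
   binary form <a2, a3> is universal modulo p and represents the unit n3 with
   a nonsingular solution, which Hensel's lemma lifts. *)

Definition nonsquare {R : pzRingType} (x : R) : Prop := forall r : R, r ^+ 2 != x.

Lemma nonsquare_neq0 {R : pzRingType} {x : R} : nonsquare x -> x != 0.
Proof. by move=> nsq_x; have := nsq_x 0; rewrite expr0n eq_sym. Qed.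

Lemma nonsquare_mulsqr (R : comPzRingType) (x y : R) :
  nonsquare (x * y ^+ 2) -> nonsquare x.
Proof. by move=> nsq_xy r; apply: contra_neq _ (nsq_xy (r * y)) => <-; rewrite exprMn. Qed.

Lemma binary_aniso {F : fieldType} {a b x y : F} :
  nonsquare (- (a * b)) -> a * x ^+ 2 + b * y ^+ 2 = 0 -> x = 0 /\ y = 0.
Proof.
move=> nsq_ab form0.
have a_neq0 : a != 0.
  by apply: contra_neq _ (nonsquare_neq0 nsq_ab) => ->; rewrite mul0r oppr0.
have y0 : y = 0.
  apply/eqP/contraT => y_neq0; have /eqP[] := nsq_ab (a * x / y).
  have -> : b = - (a * x ^+ 2) / y ^+ 2.
    apply: (mulIf (expf_neq0 2 y_neq0)); rewrite divfK ?expf_neq0 //.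
    by apply/eqP; rewrite -addr_eq0 addrC form0.
  by field.
split=> //; move/eqP: form0; rewrite y0 expr0n mulr0 addr0 mulf_eq0 (negbTE a_neq0).
by rewrite expf_eq0 => /andP[_ /eqP].
Qed.

(* If a N + t = 0, then 4 N works instead since a (4 N) + t = 3 a N. *)
Lemma exists_nonsquare_avoid {F : fieldType} {N a : F} (t : F) :
  2 != 0 :> F -> 3 != 0 :> F -> nonsquare N -> a != 0 ->
  exists2 nu, nonsquare nu & a * nu + t != 0.
Proof.
move=> two_neq0 three_neq0 nsq_N a_neq0.
have [aNt0|] := eqVneq (a * N + t) 0; last by exists N.
exists (N * 2 ^+ 2).
  apply: (@nonsquare_mulsqr _ _ 2^-1).
  by rewrite -mulrA -exprMn mulfV // expr1n mulr1.
rewrite (_ : a * (N * 2 ^+ 2) + t = 3 * (a * N) + (a * N + t)); last by ring.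
by rewrite aNt0 addr0 !mulf_neq0 ?(nonsquare_neq0 nsq_N).
Qed.

Section FiniteField.

Variable F : finFieldType.
Hypothesis two_neq0 : 2 != 0 :> F.

Lemma card_sqr_image : (#|F| < 2 * #|[set x ^+ 2 | x : F]|)%N.
Proof.
(* [sign] tells x and -x apart, so x |-> (x^2, sign x) is injective, and it
   misses (0, false). *)
pose sign (x : F) := (x == 0) || (enum_rank x < enum_rank (- x))%N.
pose code (x : F) := (x ^+ 2, sign x).
have code_inj : injective code.
  move=> x y [sqr_xy sign_xy].
  have /eqP : (x - y) * (x + y) = 0 by rewrite -subr_sqr sqr_xy subrr.
  rewrite mulf_eq0 subr_eq0 addr_eq0 => /orP[/eqP // | /eqP xE].
  have [y0 | y_neq0] := eqVneq y 0; first by rewrite xE y0 oppr0.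
  move: sign_xy; rewrite /sign xE opprK oppr_eq0 (negbTE y_neq0) /=.
  case: ltngtP => // /val_inj/enum_rank_inj yE.
  have /eqP : 2 * y = 0 by rewrite mulr2n mulrDl mul1r -{1}yE addNr.
  by rewrite mulf_eq0 (negbTE two_neq0) (negbTE y_neq0).
set S := [set x ^+ 2 | x : F].
have : [set code x | x : F] \subset setX S [set: bool] :\ (0, false).
  apply/subsetP => _ /imsetP[x _ ->]; rewrite !inE andbT.
  rewrite (imset_f (fun x : F => x ^+ 2)) // andbT /code xpair_eqE /sign.
  by rewrite sqrf_eq0; case: (x == 0).
have S0 : (0, false) \in setX S [set: bool].
  by rewrite !inE andbT; apply/imsetP; exists 0; rewrite ?expr0n.
move/subset_leq_card; rewrite card_imset //.
have := cardsD1 (0, false) (setX S [set: bool]).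
by rewrite S0 cardsX cardsT card_bool mulnC => ->; rewrite add1n ltnS.
Qed.

Lemma binary_form_surj (a b c : F) :
  a != 0 -> b != 0 -> exists x y, a * x ^+ 2 + b * y ^+ 2 = c.
Proof.
move=> a_neq0 b_neq0.
set S := [set x ^+ 2 | x : F].
set S1 := [set a * s | s in S]; set S2 := [set c - b * s | s in S].
have card_S1 : #|S1| = #|S| by rewrite card_imset //; exact: mulfI.
have card_S2 : #|S2| = #|S|.
  by rewrite card_imset // => s t /addrI/oppr_inj/(mulfI b_neq0).
have [S12_0 | [_ /setIP[/imsetP[_ /imsetP[x _ ->] ->] /imsetP[_ /imsetP[y _ ->] e]]]] :=
  set_0Vmem (S1 :&: S2).
  have := cardsUI S1 S2; rewrite S12_0 cards0 addn0 card_S1 card_S2 => cardU.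
  have := max_card (S1 :|: S2); have := card_sqr_image; rewrite -/S cardU addnn -mul2n.
  by move=> /leq_trans/[apply]; rewrite ltnn.
by exists x, y; rewrite e; ring.
Qed.

End FiniteField.

Definition diag3 {R : pzSemiRingType} (x y z : R) : 'M[R]_3 :=
  diag_mx (\row_i [:: x; y; z]`_i).

Lemma diag3ZpE (d0 d1 d2 : nat -> int) (k : nat) :
  diag3Zp d0 d1 d2 k = diag3 (d0 k) (d1 k) (d2 k).
Proof.
apply/matrixP => i j; rewrite !mxE.
by case: (i == j); rewrite ?mulr1n ?mulr0n //; case: i => [[|[|[|]]]].
Qed.

Lemma map_diag3 (R S : pzRingType) (f : {rmorphism R -> S}) (x y z : R) :
  map_mx f (diag3 x y z) = diag3 (f x) (f y) (f z).
Proof.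
apply/matrixP => i j; rewrite !mxE.
by case: (i == j); rewrite ?mulr1n ?mulr0n ?rmorph0 //; case: i => [[|[|[|]]]].
Qed.

Lemma det_diag3 (R : comPzRingType) (x y z : R) : \det (diag3 x y z) = x * y * z.
Proof. by rewrite det_diag !big_ord_recl big_ord0 !mxE mulr1 mulrA. Qed.

Lemma congr_diag3E (R : comPzRingType) (T : 'M[R]_3) (x y z : R) (i j : 'I_3) :
  (T^T *m diag3 x y z *m T) i j = x * T 0 i * T 0 j + y * T 1 i * T 1 j + z * T 2 i * T 2 j.
Proof.
rewrite mul_mx_diag !mxE !big_ord_recl big_ord0 !mxE.
have -> : lift ord0 ord0 = 1 :> 'I_3 by apply: val_inj.
have -> : lift ord0 (lift ord0 ord0) = 2 :> 'I_3 by apply: val_inj.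
by rewrite /=; ring.
Qed.

Lemma congr_diag3_cases {F : fieldType} {a0 a1 a2 D : F} {T : 'M[F]_3} :
  T \in unitmx -> T^T *m diag3 a0 a1 a2 *m T = diag3 1 (- D) 0 -> nonsquare D ->
  [\/ a2 = 0 /\ nonsquare (- (a0 * a1)),
      a0 = 0 /\ nonsquare (- (a1 * a2)) |
      a1 = 0 /\ nonsquare (- (a0 * a2))].
Proof.
rewrite unitmxE unitfE => detT_neq0 congrT nsq_D.
(* The determinant forces some a_i = 0; Cauchy-Binet on the first two columns
   writes -D as a sum of the a_i a_j times squared 2x2 minors. *)
have prod0 : a0 * a1 * a2 = 0.
  have /eqP := congr1 determinant congrT.
  rewrite !det_mulmx det_tr !det_diag3 mulr0 mulrC mulrA mulf_eq0 -expr2.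
  by rewrite expf_eq0 (negbTE detT_neq0) andbF => /eqP.
have entry (i j : 'I_3) := congr1 (fun M : 'M_3 => M i j) congrT.
have := entry 0 0; have := entry 1 1; have := entry 0 1.
rewrite !congr_diag3E !mxE /= mulr1n mulr0n => e01 e11 e00.
set m01 := T 0 0 * T 1 1 - T 0 1 * T 1 0.
set m02 := T 0 0 * T 2 1 - T 0 1 * T 2 0.
set m12 := T 1 0 * T 2 1 - T 1 1 * T 2 0.
have minorE : - D = a0 * a1 * m01 ^+ 2 + a0 * a2 * m02 ^+ 2 + a1 * a2 * m12 ^+ 2.
  have cauchy_binet :
    (a0 * T 0 0 * T 0 0 + a1 * T 1 0 * T 1 0 + a2 * T 2 0 * T 2 0) *
    (a0 * T 0 1 * T 0 1 + a1 * T 1 1 * T 1 1 + a2 * T 2 1 * T 2 1) -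
    (a0 * T 0 0 * T 0 1 + a1 * T 1 0 * T 1 1 + a2 * T 2 0 * T 2 1) ^+ 2 =
    a0 * a1 * m01 ^+ 2 + a0 * a2 * m02 ^+ 2 + a1 * a2 * m12 ^+ 2.
    by rewrite /m01 /m02 /m12; ring.
  by rewrite e00 e11 e01 mul1r expr0n subr0 in cauchy_binet.
have nsq_of k l m : - D = k * l * m ^+ 2 -> nonsquare (- (k * l)).
  by move=> Dkl; apply: (@nonsquare_mulsqr _ _ m); rewrite mulNr -Dkl opprK.
move/eqP: prod0; rewrite !mulf_eq0 -orbA => /or3P[] /eqP a_eq0.
- by apply: Or32; split=> //; apply: (nsq_of _ _ m12); rewrite minorE a_eq0; ring.
- by apply: Or33; split=> //; apply: (nsq_of _ _ m02); rewrite minorE a_eq0; ring.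
- by apply: Or31; split=> //; apply: (nsq_of _ _ m01); rewrite minorE a_eq0; ring.
Qed.


Lemma Posz_expn2 (n : nat) : (n ^ 2)%N%:Z = n%:Z * n%:Z.
Proof. by rewrite expnS expn1 PoszM. Qed.

Lemma dvdz_expn2 (n : nat) : (n%:Z %| (n ^ 2)%N%:Z)%Z.
Proof. by rewrite Posz_expn2 dvdz_mulr. Qed.

Lemma coherent_cst (p : nat) (x : int) : coherent p (cstZp x).
Proof. by []. Qed.

Lemma repr_Zp_cons {p : nat} (c : int) (b : seq int) (n : int) :
  repr_Zp p b n -> repr_Zp p (c :: b) n.
Proof.
case=> xs [size_xs [xs_coh n_eq]].
exists (cstZp 0 :: xs); split; last split.
- by rewrite /= size_xs.
- by case=> [|i] //= /xs_coh.
by move=> k; rewrite big_ord_recl /= expr0n mulr0 add0r; exact: n_eq.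
Qed.

Lemma repr_Zp_scale {p : nat} (c : int) (b : seq int) (n : int) :
  repr_Zp p b n -> repr_Zp p [seq c * bi | bi <- b] (c * n).
Proof.
case=> xs [size_xs [xs_coh n_eq]]; exists xs; rewrite size_map; split=> //; split=> // k.
apply/eqP; rewrite eqz_mod_dvd.
have /eqP := n_eq k; rewrite eqz_mod_dvd /cstZp => dvd_k.
rewrite (eq_bigr (fun i : 'I_(size b) => c * (b`_i * (nth (cstZp 0) xs i k) ^+ 2))).
  by rewrite -mulr_sumr -mulrBr dvdz_mull.
by move=> i _; rewrite (nth_map 0) // mulrA.
Qed.

Lemma repr_Zp_swap {p : nat} (b1 b2 : int) (b : seq int) (n : int) :
  repr_Zp p [:: b1, b2 & b] n -> repr_Zp p [:: b2, b1 & b] n.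
Proof.
case=> xs [size_xs [xs_coh n_eq]].
case: xs size_xs xs_coh n_eq => [|x1 [|x2 xs]] //= size_xs xs_coh n_eq.
exists [:: x2, x1 & xs]; split=> //; split.
  by case=> [|[|i]]; [exact: (xs_coh 1%N) | exact: (xs_coh 0%N) | exact: (xs_coh i.+2)].
by move=> k; have := n_eq k; rewrite !big_ord_recl /= addrCA.
Qed.

Lemma repr_Zp_pair_dvd {p : nat} (k : nat) {a b n : int} : repr_Zp p [:: a; b] n ->
  exists x y : int, ((p ^ k)%N%:Z %| n - (a * x ^+ 2 + b * y ^+ 2))%Z.
Proof.
case=> xs [size_xs [_ n_eq]].
case: xs size_xs n_eq => [|x [|y [|]]] //= _ n_eq; exists (x k), (y k).
by have /eqP := n_eq k; rewrite eqz_mod_dvd !big_ord_recl big_ord0 addr0.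
Qed.

Section PrimeField.

Context {p : nat} (p_pr : prime p).

Lemma Fp_intr_eq0 (x : int) : (x%:~R == 0 :> 'F_p) = (p%:Z %| x)%Z.
Proof. by rewrite (dvdz_pcharf (pchar_Fp p_pr)). Qed.

Lemma Fp_intr_val (x : 'F_p) : ((x : nat)%:Z)%:~R = x.
Proof. by rewrite -pmulrn natr_Zp. Qed.

Lemma Fp_intr_eq {k : nat} {x y : int} :
  (0 < k)%N -> ((p ^ k)%N%:Z %| x - y)%Z -> x%:~R = y%:~R :> 'F_p.
Proof.
move=> k_gt0 dvd_xy; apply/eqP; rewrite -subr_eq0 -rmorphB Fp_intr_eq0.
by apply: dvdz_trans dvd_xy; rewrite dvdzE /= dvdn_exp.
Qed.

Lemma Fp_natr_neq0 (n : nat) : (0 < n < p)%N -> n%:R != 0 :> 'F_p.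
Proof.
case/andP=> n_gt0 n_lt_p; rewrite pmulrn Fp_intr_eq0 dvdzE /=.
by apply/negP => /dvdn_leq; lia.
Qed.

Lemma Fp_intr_char : p%:Z%:~R = 0 :> 'F_p.
Proof. by rewrite -pmulrn pchar_Fp_0. Qed.

Hypothesis p_gt2 : (2 < p)%N.

(* Newton step: t solves 2 b y t = -(b y^2 - c) / p^k modulo p. *)
Definition hensel_step (b c y : int) (k : nat) : int :=
  let q := ((b * y ^+ 2 - c) %/ (p ^ k)%N%:Z)%Z in
  y + ((- q%:~R / (2 * b * y)%:~R : 'F_p) : nat)%:Z * (p ^ k)%N%:Z.

Lemma hensel_stepP (b c y : int) (k : nat) :
  (0 < k)%N -> (b * y)%:~R != 0 :> 'F_p ->
  ((p ^ k)%N%:Z %| b * y ^+ 2 - c)%Z ->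
  ((p ^ k)%N%:Z %| hensel_step b c y k - y)%Z /\
  ((p ^ k.+1)%N%:Z %| b * hensel_step b c y k ^+ 2 - c)%Z.
Proof.
move=> k_gt0 by_neq0 /divzK; rewrite /hensel_step.
set q := (_ %/ _)%Z; set t := (- q%:~R / _); set pk := (p ^ k)%N%:Z => qE.
split; first by rewrite addrC addKr dvdz_mull.
have -> : b * (y + (t : nat)%:Z * pk) ^+ 2 - c =
          (q + 2 * b * y * (t : nat)%:Z + b * (t : nat)%:Z ^+ 2 * pk) * pk.
  have -> : c = b * y ^+ 2 - q * pk by rewrite qE; ring.
  by ring.
have pk_neq0 : pk != 0 by rewrite eqz_nat expn_eq0 negb_and -lt0n prime_gt0.
rewrite expnSr PoszM -/pk [_ * p%:Z]mulrC dvdz_mul2r //.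
have := Fp_intr_val t; rewrite /t; set r := (_ : nat)%:Z => rE.
have pk0 : pk%:~R = 0 :> 'F_p.
  by apply/eqP; rewrite Fp_intr_eq0 dvdzE /= dvdn_exp.
have den_neq0 : (2 * b * y)%:~R != 0 :> 'F_p.
  by rewrite -mulrA rmorphM mulf_neq0 // rmorph_nat Fp_natr_neq0 //; lia.
rewrite -Fp_intr_eq0 !rmorphD !rmorphM /= rE pk0 mulr0 addr0.
move: den_neq0; rewrite !rmorphM rmorph_nat /= !mulf_eq0 !negb_or => den_neq0.
by apply/eqP; field; case/andP: den_neq0 => /andP[-> ->] ->.
Qed.

(* For k >= 1, [hensel_seq b c y0 k] solves b y^2 = c k modulo p^k; entries
   0 and 1 are both y0. *)
Fixpoint hensel_seq (b : int) (c : nat -> int) (y0 : int) (k : nat) : int :=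
  match k with
  | S ((S _) as k1) => hensel_step b (c k1.+1) (hensel_seq b c y0 k1) k1
  | _ => y0
  end.

Section HenselSequence.

Variables (b : int) (c : nat -> int) (y0 : int).
Hypotheses (c_coh : coherent p c) (by0_neq0 : (b * y0)%:~R != 0 :> 'F_p)
  (y0_root : (b * y0 ^+ 2)%:~R = (c 1%N)%:~R :> 'F_p).

Local Notation s := (hensel_seq b c y0).

Lemma hensel_seq_next {k : nat} :
  ((p ^ k.+1)%N%:Z %| b * s k.+1 ^+ 2 - c k.+1)%Z -> (b * s k.+1)%:~R != 0 :> 'F_p ->
  ((p ^ k.+1)%N%:Z %| s k.+2 - s k.+1)%Z /\
  ((p ^ k.+2)%N%:Z %| b * s k.+2 ^+ 2 - c k.+2)%Z.
Proof.
move=> dvd_k unit_k.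
apply: hensel_stepP => //.
have := c_coh k.+1; move/eqP; rewrite eqz_mod_dvd => dvd_c.
rewrite (_ : _ - c k.+2 = b * s k.+1 ^+ 2 - c k.+1 - (c k.+2 - c k.+1)); last by ring.
exact: rpredB.
Qed.

Lemma hensel_seq_inv (k : nat) :
  ((p ^ k.+1)%N%:Z %| b * s k.+1 ^+ 2 - c k.+1)%Z /\ (b * s k.+1)%:~R != 0 :> 'F_p.
Proof.
elim: k => [|k [dvd_k unit_k]].
  by split=> //=; rewrite expn1 -Fp_intr_eq0 rmorphB /= y0_root subrr.
have [dvd_step dvd_next] := hensel_seq_next dvd_k unit_k.
split=> //; suff -> : (b * s k.+2)%:~R = (b * s k.+1)%:~R :> 'F_p by [].
by apply: (Fp_intr_eq (ltn0Sn k)); rewrite -mulrBr dvdz_mull.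
Qed.

Lemma hensel_sqrt : exists2 y, coherent p y & eqZp p (fun k => b * y k ^+ 2) c.
Proof.
exists s => [[|k]|[|k]]; rewrite ?expn0 ?modz1 //; apply/eqP; rewrite eqz_mod_dvd.
  by have [dvd_k unit_k] := hensel_seq_inv k; case: (hensel_seq_next dvd_k unit_k).
by case: (hensel_seq_inv k).
Qed.

End HenselSequence.

Lemma Zp_unit_Fp {x : nat -> int} {k : nat} :
  (0 < k)%N -> Zp_unit p x -> (x k)%:~R != 0 :> 'F_p.
Proof.
move=> k_gt0 [y [_ /(_ k)/eqP]]; rewrite eqz_mod_dvd /cstZp => /(Fp_intr_eq k_gt0).
by rewrite rmorphM rmorph1 /=; apply: contra_eq_neq => ->; rewrite mul0r eq_sym oner_neq0.
Qed.

Lemma nonsquare_of_Zp_nonsquare {D : nat -> int} :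
  coherent p D -> Zp_unit p D -> ~ Zp_square p D -> nonsquare ((D 1%N)%:~R : 'F_p).
Proof.
move=> D_coh D_unit D_nsq r; apply/eqP => rE; apply: D_nsq.
have r_neq0 : r != 0 by apply: contra_eq_neq rE => ->; rewrite expr0n eq_sym Zp_unit_Fp.
have r_unit : (1 * (r : nat)%:Z)%:~R != 0 :> 'F_p by rewrite mul1r Fp_intr_val.
have r_root : (1 * (r : nat)%:Z ^+ 2)%:~R = (D 1%N)%:~R :> 'F_p.
  by rewrite mul1r rmorphXn /= Fp_intr_val.
have [y y_coh y_eq] := hensel_sqrt _ _ _ D_coh r_unit r_root.
by exists y; split=> // k; rewrite -[y k ^+ 2]mul1r.
Qed.

Lemma dvdz_sqr_Fp (b x : int) : x%:~R = 0 :> 'F_p -> ((p ^ 2)%N%:Z %| b * x ^+ 2)%Z.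
Proof.
move/eqP; rewrite Fp_intr_eq0 => /(dvdz_exp2r 2) dvd_x2.
by rewrite Posz_expn2 -expr2 dvdz_mull.
Qed.

Lemma sqr_ndvd_pmul {m : int} : m%:~R != 0 :> 'F_p -> ~ ((p ^ 2)%N%:Z %| p%:Z * m)%Z.
Proof.
rewrite Fp_intr_eq0 Posz_expn2 dvdz_mul2l; first by move/negP.
by rewrite eqz_nat -lt0n prime_gt0.
Qed.

Lemma binary_aniso_dvd {a b x y : int} :
  nonsquare (- (a%:~R * b%:~R : 'F_p)) -> (p%:Z %| a * x ^+ 2 + b * y ^+ 2)%Z ->
  ((p ^ 2)%N%:Z %| a * x ^+ 2 + b * y ^+ 2)%Z.
Proof.
move=> nsq_ab dvd_form.
have /(binary_aniso nsq_ab)[x0 y0] : a%:~R * x%:~R ^+ 2 + b%:~R * y%:~R ^+ 2 = 0 :> 'F_p.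
  by apply/eqP; move: dvd_form; rewrite -Fp_intr_eq0 rmorphD !rmorphM /= -!expr2.
by rewrite rpredD // dvdz_sqr_Fp.
Qed.

Lemma ordp_le1 (n : int) : ~ ((p ^ 2)%N%:Z %| n)%Z -> ordp_le p n 1.
Proof.
move=> ndvd_n; apply/andP; split.
  by apply: contra_notN ndvd_n => /eqP ->; rewrite dvdz0.
rewrite leqNgt; apply: contra_notN ndvd_n => lt1_logn.
have n_gt0 : (0 < `|n|)%N by rewrite lt0n; apply: contraTneq lt1_logn => ->; rewrite logn0.
by rewrite dvdzE /= pfactor_dvdn.
Qed.

Lemma ordp_le1_Fp (n : int) : n%:~R != 0 :> 'F_p -> ordp_le p n 1.
Proof.
rewrite Fp_intr_eq0 => ndvd_n; apply: ordp_le1; apply: contraNnot ndvd_n.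
by apply: dvdz_trans; rewrite dvdzE /= dvdn_exp.
Qed.





Lemma repr_Zp_lift (b x : seq int) (n : int) (i : nat) :
  size x = size b -> (i < size b)%N -> (b`_i * x`_i)%:~R != 0 :> 'F_p ->
  (\sum_(j < size b) b`_j * x`_j ^+ 2)%:~R = n%:~R :> 'F_p -> repr_Zp p b n.
Proof.
move=> size_x lt_i unit_i root.
pose i0 : 'I_(size b) := Ordinal lt_i.
pose rest := \sum_(j < size b | j != i0) b`_j * x`_j ^+ 2.
have root_i : (b`_i * x`_i ^+ 2)%:~R = (cstZp (n - rest) 1%N)%:~R :> 'F_p.
  by rewrite /cstZp rmorphB /= -root (bigD1 i0) //= rmorphD addrK.
have [y y_coh y_eq] := hensel_sqrt _ _ _ (coherent_cst p (n - rest)) unit_i root_i.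
pose xs := set_nth (cstZp 0) [seq cstZp z | z <- x] i y.
have xsE j : (j < size b)%N -> nth (cstZp 0) xs j = if j == i then y else cstZp x`_j.
  by move=> lt_j; rewrite nth_set_nth /= (nth_map 0) ?size_x.
exists xs; split; [|split].
- by rewrite size_set_nth size_map size_x; apply/maxn_idPr.
- by move=> j /xsE ->; case: eqP.
move=> k; rewrite (bigD1 i0) //= xsE // eqxx.
rewrite (eq_bigr (fun j : 'I_(size b) => b`_j * x`_j ^+ 2)); last first.
  by move=> j j_neq_i; rewrite xsE // ifN.
have /eqP := y_eq k; rewrite eqz_mod_dvd /cstZp => dvd_k.
apply/eqP; rewrite eqz_mod_dvd /cstZp -/rest.
by rewrite (_ : n - _ = - (b`_i * y k ^+ 2 - (n - rest))) ?rpredN //; ring.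
Qed.

Lemma not_repr_pair_ord1 {a b n : int} :
  nonsquare (- (a%:~R * b%:~R : 'F_p)) -> (p%:Z %| n)%Z -> ~ ((p ^ 2)%N%:Z %| n)%Z ->
  ~ repr_Zp p [:: a; b] n.
Proof.
move=> nsq_ab dvd_n ndvd_n /(repr_Zp_pair_dvd 2)[x [y dvd_nxy]]; apply: ndvd_n.
have dvd_form : (p%:Z %| a * x ^+ 2 + b * y ^+ 2)%Z.
  by rewrite -[_ + _](subKr n) rpredB // (dvdz_trans (dvdz_expn2 p)).
by rewrite -[n](subrK (a * x ^+ 2 + b * y ^+ 2)) rpredD // binary_aniso_dvd.
Qed.

Lemma not_repr_pair_nonsquare {a b n : int} {nu : 'F_p} :
  a%:~R = 0 :> 'F_p -> b%:~R != 0 :> 'F_p -> n%:~R = b%:~R * nu -> nonsquare nu ->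
  ~ repr_Zp p [:: a; b] n.
Proof.
move=> a0 b_neq0 nE nsq_nu /(repr_Zp_pair_dvd 1)[x [y]].
rewrite expn1 -Fp_intr_eq0 rmorphB rmorphD !rmorphM /= a0 mul0r add0r nE -mulrBr.
by rewrite mulf_eq0 (negbTE b_neq0) subr_eq0 -expr2 eq_sym; apply/negP/nsq_nu.
Qed.

Lemma repr_Zp_pmul {b c n : int} :
  (b * c)%:~R != 0 :> 'F_p -> ((p ^ 2)%N%:Z %| n - p%:Z * b * c ^+ 2)%Z ->
  repr_Zp p [:: p%:Z * b] n.
Proof.
move=> bc_neq0 dvd_n.
have /dvdzP[m nE] : (p%:Z %| n)%Z.
  rewrite -[n](subrK (p%:Z * b * c ^+ 2)) rpredD ?(dvdz_trans (dvdz_expn2 p) dvd_n) //.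
  by rewrite -mulrA dvdz_mulr.
rewrite (_ : n - _ = p%:Z * (m - b * c ^+ 2)) in dvd_n; last by rewrite nE; ring.
rewrite Posz_expn2 dvdz_mul2l ?eqz_nat -?lt0n ?prime_gt0 // in dvd_n.
have mE : (b * c ^+ 2)%:~R = m%:~R :> 'F_p.
  by apply: (Fp_intr_eq (ltn0Sn 0)); rewrite expn1 -opprB rpredN.
rewrite nE [m * _]mulrC; apply: (repr_Zp_scale p%:Z [:: b] m).
apply: (repr_Zp_lift [:: b] [:: c] m 0) => //.
by rewrite big_ord_recl big_ord0 addr0.
Qed.

Lemma repr_Zp_pair_unit (a b n : int) :
  a%:~R != 0 :> 'F_p -> b%:~R != 0 :> 'F_p -> n%:~R != 0 :> 'F_p -> repr_Zp p [:: a; b] n.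
Proof.
move=> a_neq0 b_neq0 n_neq0.
have two_neq0 : 2 != 0 :> 'F_p by apply: Fp_natr_neq0; lia.
have [X [Y XYE]] := binary_form_surj _ two_neq0 _ _ (n%:~R) a_neq0 b_neq0.
pose i := (X == 0) : nat.
apply: (repr_Zp_lift [:: a; b] [:: (X : nat)%:Z; (Y : nat)%:Z] n i) => //.
- by rewrite /i; case: (X == 0).
- rewrite /i; case: (eqVneq X 0) => [X0|X_neq0] /=; rewrite rmorphM /= Fp_intr_val mulf_neq0 //.
  by apply: contra_neq _ n_neq0 => Y0; rewrite -XYE X0 Y0 expr0n /= !mulr0 addr0.
by rewrite !big_ord_recl big_ord0 /= addr0 rmorphD !rmorphM /= -!expr2 !Fp_intr_val.
Qed.

Lemma eqZpM_Fp (n : nat) (A B : nat -> 'M[int]_n) :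
  eqZpM p n A B -> map_mx intr (A 1%N) = map_mx intr (B 1%N) :> 'M['F_p]_n.
Proof.
move=> AB; apply/matrixP => i j; rewrite !mxE; apply: (Fp_intr_eq (ltn0Sn 0)).
by have /eqP := AB i j 1%N; rewrite eqz_mod_dvd.
Qed.

Lemma isometric_Zp_Fp {n : nat} {A B : nat -> 'M[int]_n} :
  isometric_Zp p n A B ->
  exists2 T : 'M['F_p]_n,
    T \in unitmx & T^T *m map_mx intr (A 1%N) *m T = map_mx intr (B 1%N).
Proof.
case=> T [S [_ _ /eqZpM_Fp TS _ /eqZpM_Fp congrT]]; exists (map_mx intr (T 1%N)).
  by move: TS; rewrite map_mxM map_scalar_mx rmorph1 => /mulmx1_unit[].
by rewrite map_trmx -!map_mxM.
Qed.

Lemma isometric_diag3_Fp_cases {a1 a2 a3 : int} {Delta eps : nat -> int} :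
  nonsquare ((Delta 1%N)%:~R : 'F_p) ->
  isometric_Zp p 3 (diag3Zp (cstZp a1) (cstZp a2) (cstZp a3))
    (diag3Zp (cstZp 1) (fun k => - Delta k) (fun k => p%:Z * eps k)) ->
  [\/ a3%:~R = 0 :> 'F_p /\ nonsquare (- (a1%:~R * a2%:~R : 'F_p)),
      a1%:~R = 0 :> 'F_p /\ nonsquare (- (a2%:~R * a3%:~R : 'F_p)) |
      a2%:~R = 0 :> 'F_p /\ nonsquare (- (a1%:~R * a3%:~R : 'F_p))].
Proof.
move=> nsq_D /isometric_Zp_Fp[T T_unit].
rewrite !diag3ZpE !map_diag3 /cstZp rmorph1 rmorphN rmorphM /= Fp_intr_char mul0r.
by move/(congr_diag3_cases T_unit)/(_ nsq_D).
Qed.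

Lemma isometric_diag3_pdiv_unit {a1 a2 q : int} {Delta eps : nat -> int} :
  Zp_unit p eps -> nonsquare (- (a1%:~R * a2%:~R : 'F_p)) ->
  isometric_Zp p 3 (diag3Zp (cstZp a1) (cstZp a2) (cstZp (q * p%:Z)))
    (diag3Zp (cstZp 1) (fun k => - Delta k) (fun k => p%:Z * eps k)) ->
  q%:~R != 0 :> 'F_p.
Proof.
move=> eps_unit nsq_12 [T [_ [_ _ _ _ /(_ 2 2 2%N)/eqP]]].
rewrite eqz_mod_dvd !diag3ZpE congr_diag3E !mxE /= /cstZp mulr1n -!mulrA -!expr2.
set form := a1 * _ + a2 * _; set t := T 2%N 2 2 => dvd_entry.
apply/negP => q0.
have /dvdzP[r qE] : (p%:Z %| q)%Z by rewrite -Fp_intr_eq0.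
have dvd_q : ((p ^ 2)%N%:Z %| q * (p%:Z * t ^+ 2))%Z.
  by apply/dvdzP; exists (r * t ^+ 2); rewrite qE Posz_expn2; ring.
have dvd_form : ((p ^ 2)%N%:Z %| form)%Z.
  have : (p%:Z %| form)%Z.
    rewrite (_ : form = form + q * (p%:Z * t ^+ 2) - p%:Z * eps 2%N
                        - q * (p%:Z * t ^+ 2) + p%:Z * eps 2%N); last by ring.
    have dvd_entry1 := dvdz_trans (dvdz_expn2 p) dvd_entry.
    have dvd_q1 := dvdz_trans (dvdz_expn2 p) dvd_q.
    by rewrite (rpredD (rpredB dvd_entry1 dvd_q1)) // dvdz_mulr.
  exact: binary_aniso_dvd nsq_12.
apply: (sqr_ndvd_pmul (Zp_unit_Fp (ltn0Sn 1) eps_unit)).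
rewrite (_ : p%:Z * eps 2%N = form + q * (p%:Z * t ^+ 2)
                               - (form + q * (p%:Z * t ^+ 2) - p%:Z * eps 2%N)); last by ring.
by rewrite rpredB // rpredD.
Qed.

End PrimeField.

Lemma solve_congruence {m u r : int} :
  0 < m -> coprimez u m -> ~ (m %| r)%Z -> exists2 v, 0 < v < m & (m %| u * v - r)%Z.
Proof.
move=> m_gt0 /coprimezP[[x y] /= bezout] ndvd_r.
have m_neq0 : m != 0 by rewrite gt_eqF.
set q := (r * x %/ m)%Z; set v := (r * x %% m)%Z.
have vE : v = r * x - q * m by rewrite [r * x in RHS](divz_eq _ m) addrC addKr.
exists v; last first.
  apply/dvdzP; exists (- (u * q) - r * y).
  by rewrite -[r in LHS]mulr1 -bezout vE; ring.
have v_lt_m : v < m by rewrite -[m in v < m]gtr0_norm // ltz_mod.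
rewrite v_lt_m andbT lt_def modz_ge0 // andbT.
apply/eqP => v0; apply: ndvd_r; apply/dvdzP; exists (q * u + r * y).
have rxE : r * x = q * m by apply/eqP; rewrite -subr_eq0 -vE v0.
rewrite -[r in LHS]mulr1 -bezout; transitivity (r * x * u + r * y * m); first by ring.
by rewrite rxE; ring.
Qed.

Definition admissible (p : nat) (u a1 a2 a3 al1 al2 al3 v : int) : Prop :=
  let n2 := u * v + a1 * al1 ^+ 2 + a2 * al2 ^+ 2 in
  let n3 := n2 + a3 * al3 ^+ 2 in
  [/\ 0 < v < (p ^ 2)%N%:Z, ~ repr_Zp p [:: a1; a2] n2,
      repr_Zp p [:: a1; a2; a3] n3 & ordp_le p n2 1 && ordp_le p n3 1].

Lemma admissible_swap (p : nat) (u a1 a2 a3 al1 al2 al3 v : int) :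
  admissible p u a1 a2 a3 al1 al2 al3 v -> admissible p u a2 a1 a3 al2 al1 al3 v.
Proof.
rewrite /admissible [u * v + a2 * _ + _]addrAC.
by case=> v_bd n2_nrepr /repr_Zp_swap n3_repr ord_le; split=> // /repr_Zp_swap.
Qed.

Section AdmissibleShift.

Context {p : nat} (p_pr : prime p) (p_gt3 : (3 < p)%N).

Let p_gt2 : (2 < p)%N. Proof. exact: ltnW. Qed.
Let two_lt_p : (0 < 2 < p)%N. Proof. exact: p_gt2. Qed.
Let three_lt_p : (0 < 3 < p)%N. Proof. exact: p_gt3. Qed.

(* c = 2 is needed when t = 1, and then c^2 - t = 3: this is where p > 3 is
   used. *)
Lemma exists_unit_sqr_sub (t : int) :
  exists2 c : int, c%:~R != 0 :> 'F_p & (c ^+ 2 - t)%:~R != 0 :> 'F_p.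
Proof.
have [tE|t_neq1] := eqVneq (t%:~R : 'F_p) 1; [exists 2 | exists 1].
- by rewrite rmorph_nat Fp_natr_neq0.
- rewrite rmorphB rmorphXn /= tE rmorph_nat (_ : 2%:R ^+ 2 - 1 = 3%:R); last by ring.
  exact: Fp_natr_neq0.
- by rewrite rmorph1 oner_neq0.
by rewrite rmorphB /= expr1n rmorph1 subr_eq0 eq_sym.
Qed.

Lemma exists_admissible_pdvd_a3 {u a1 a2 q : int} (al1 al2 al3 : int) :
  u%:~R != 0 :> 'F_p -> nonsquare (- (a1%:~R * a2%:~R : 'F_p)) -> q%:~R != 0 :> 'F_p ->
  exists v, admissible p u a1 a2 (q * p%:Z) al1 al2 al3 v.
Proof.
move=> u_neq0 nsq_12 q_neq0; set a3 := q * p%:Z.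
have [c c_neq0 X_neq0] := exists_unit_sqr_sub (al3 ^+ 2).
set X := c ^+ 2 - al3 ^+ 2; set g := a1 * al1 ^+ 2 + a2 * al2 ^+ 2.
have ndvd_a3X : ~ ((p ^ 2)%N%:Z %| a3 * X)%Z.
  by rewrite /a3 mulrAC mulrC; apply: (sqr_ndvd_pmul p_pr); rewrite rmorphM mulf_neq0.
have ndvd_r : ~ ((p ^ 2)%N%:Z %| a3 * X - g)%Z.
  move=> dvd_r; apply: ndvd_a3X.
  have dvd_g : (p%:Z %| g)%Z.
    rewrite -[g](subKr (a3 * X)) rpredB //; last exact: dvdz_trans (dvdz_expn2 p) dvd_r.
    by rewrite /a3 mulrAC dvdz_mull.
  by rewrite -(subrK g (a3 * X)) rpredD // (binary_aniso_dvd p_pr nsq_12 dvd_g).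
have u_cop : coprimez u (p ^ 2)%N%:Z.
  have : ~~ (p%:Z %| u)%Z by rewrite -Fp_intr_eq0.
  by rewrite dvdzE coprimezE /= => ndvd_u; rewrite coprimeXr // coprime_sym prime_coprime.
have p2_gt0 : 0 < (p ^ 2)%N%:Z by rewrite ltz_nat expn_gt0 prime_gt0.
(* n2 = a3 X and n3 = a3 c^2 modulo p^2 *)
have [v v_bd dvd_uv] := solve_congruence p2_gt0 u_cop ndvd_r.
exists v; rewrite /admissible; set n2 := u * v + _ + _.
have n2E : ((p ^ 2)%N%:Z %| n2 - a3 * X)%Z.
  by rewrite (_ : _ - _ = u * v - (a3 * X - g)) // /n2 /g; ring.
have ndvd_n2 : ~ ((p ^ 2)%N%:Z %| n2)%Z.
  by move=> dvd_n2; apply: ndvd_a3X; rewrite -[a3 * X](subKr n2) rpredB.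
have n3E : ((p ^ 2)%N%:Z %| n2 + a3 * al3 ^+ 2 - p%:Z * q * c ^+ 2)%Z.
  by rewrite (_ : _ - _ = n2 - a3 * X) //; rewrite /a3 /X; ring.
have ndvd_n3 : ~ ((p ^ 2)%N%:Z %| n2 + a3 * al3 ^+ 2)%Z.
  move=> dvd_n3; have := rpredB dvd_n3 n3E; rewrite subKr -mulrA.
  by apply: (sqr_ndvd_pmul p_pr); rewrite rmorphM mulf_neq0 // rmorphXn expf_neq0.
split=> //.
- apply: (not_repr_pair_ord1 p_pr nsq_12 _ ndvd_n2).
  rewrite -[n2](subrK (a3 * X)) rpredD //; first exact: dvdz_trans (dvdz_expn2 p) n2E.
  by rewrite /a3 mulrAC dvdz_mull.
- do 2!apply: repr_Zp_cons; rewrite (_ : [:: a3] = [:: p%:Z * q]); last by rewrite /a3 mulrC.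
  by apply: (repr_Zp_pmul p_pr p_gt2 _ n3E); rewrite rmorphM mulf_neq0.
by apply/andP; split; apply: (ordp_le1 p_pr).
Qed.

Lemma exists_admissible_pdvd_a1 {u a1 a2 a3 : int} (al1 al2 al3 : int) :
  u%:~R != 0 :> 'F_p -> a1%:~R = 0 :> 'F_p -> nonsquare (- (a2%:~R * a3%:~R : 'F_p)) ->
  exists v, admissible p u a1 a2 a3 al1 al2 al3 v.
Proof.
move=> u_neq0 a1_0 nsq_23.
have /andP[a2_neq0 a3_neq0] : (a2%:~R != 0 :> 'F_p) && (a3%:~R != 0 :> 'F_p).
  by move: (nonsquare_neq0 nsq_23); rewrite oppr_eq0 mulf_eq0 negb_or.
have [nu nsq_nu n3_nu_neq0] :=
  exists_nonsquare_avoid ((a3 * al3 ^+ 2)%:~R) (Fp_natr_neq0 p_pr 2 two_lt_p)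
    (Fp_natr_neq0 p_pr 3 three_lt_p) nsq_23 a2_neq0.
set g := a1 * al1 ^+ 2 + a2 * al2 ^+ 2.
set w : 'F_p := (a2%:~R * nu - g%:~R) / u%:~R.
have uwE : u%:~R * w = a2%:~R * nu - g%:~R by rewrite /w mulrC divfK.
have w_lt_p : ((w : nat) < p)%N by rewrite -[X in (_ < X)%N](Fp_cast p_pr) ltn_ord.
clearbody w.
(* Adding p keeps v positive when w = 0. *)
exists ((w : nat)%:Z + p%:Z); rewrite /admissible; set n2 := _ + _ + _.
have n2E : n2%:~R = a2%:~R * nu :> 'F_p.
  rewrite /n2 -addrA -/g rmorphD rmorphM rmorphD /= Fp_intr_val.
  by rewrite (Fp_intr_char p_pr) addr0 uwE subrK.
have n2_neq0 : n2%:~R != 0 :> 'F_p by rewrite n2E mulf_neq0 ?(nonsquare_neq0 nsq_nu).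
have n3_neq0 : (n2 + a3 * al3 ^+ 2)%:~R != 0 :> 'F_p by rewrite rmorphD /= n2E n3_nu_neq0.
split.
- by rewrite -PoszD !ltz_nat expnS expn1; nia.
- exact: (not_repr_pair_nonsquare p_pr a1_0 a2_neq0 n2E nsq_nu).
- exact/repr_Zp_cons/(repr_Zp_pair_unit p_pr p_gt2).
by rewrite !(ordp_le1_Fp p_pr).
Qed.

End AdmissibleShift.

Theorem lemma2p4 (p u a1 a2 a3 al1 al2 al3 : nat) (Delta : nat -> int) :
  prime p -> (3 < p)%N -> (0 < u)%N -> coprime u p ->
  (0 < a1)%N -> (0 < a2)%N -> (0 < a3)%N ->
  (0 < al1)%N -> (0 < al2)%N -> (0 < al3)%N ->
  coherent p Delta -> Zp_unit p Delta -> ~ Zp_square p Delta ->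
  (exists eps : nat -> int,
     [/\ coherent p eps, Zp_unit p eps &
         isometric_Zp p 3
           (diag3Zp (cstZp a1%:Z) (cstZp a2%:Z) (cstZp a3%:Z))
           (diag3Zp (cstZp 1) (fun k => - Delta k)
                    (fun k => p%:Z * eps k))]) ->
  exists v : int,
    let n2 := u%:Z * v + a1%:Z * (al1%:Z) ^+ 2 + a2%:Z * (al2%:Z) ^+ 2 in
    let n3 := n2 + a3%:Z * (al3%:Z) ^+ 2 in
    [/\ 0 < v < (p ^ 2)%N%:Z,
        ~ repr_Zp p [:: a1%:Z; a2%:Z] n2,
        repr_Zp p [:: a1%:Z; a2%:Z; a3%:Z] n3 &
        ordp_le p n2 1 && ordp_le p n3 1].
Proof.
move=> p_pr p_gt3 _ u_cop _ _ _ _ _ _ D_coh D_unit D_nsq [eps [_ eps_unit iso]].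
have p_gt2 : (2 < p)%N by apply: ltnW.
have u_neq0 : u%:Z%:~R != 0 :> 'F_p.
  by rewrite Fp_intr_eq0 // dvdzE /= -prime_coprime // coprime_sym.
have nsq_D := nonsquare_of_Zp_nonsquare p_pr p_gt2 D_coh D_unit D_nsq.
case: (isometric_diag3_Fp_cases p_pr nsq_D iso) => [] [a_0 nsq_a].
- have /dvdzP[q a3E] : (p%:Z %| a3%:Z)%Z by rewrite -Fp_intr_eq0 // a_0.
  rewrite a3E in iso *; apply: (exists_admissible_pdvd_a3 p_pr p_gt3 al1 al2 al3 u_neq0 nsq_a).
  exact: (isometric_diag3_pdiv_unit p_pr eps_unit nsq_a iso).
- apply: (exists_admissible_pdvd_a1 p_pr p_gt3 al1 al2 al3 u_neq0 a_0 nsq_a).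
- have [v adm] := exists_admissible_pdvd_a1 p_pr p_gt3 al2 al1 al3 u_neq0 a_0 nsq_a.
  by exists v; apply: admissible_swap.
Qed.
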